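(* (Flocking of the Cucker–Smale model.) Let $(\mathbf x(t),\mathbf v(t))=(\mathbf x_1,\dots,\mathbf x_N,\mathbf v_1,\dots,\mathbf v_N)(t)$ be a global classical solution of the Cucker–Smale system with communication kernel $\phi$ (essential communication diameter $D_\phi>0$) and amplitude $\kappa>0$, with initial data $(\mathbf x_0,\mathbf v_0)$. Assume the set of initial positions $\{\mathbf x_1(0),\dots,\mathbf x_N(0)\}$ is chain connected at scale $r$, with $r\le\frac16D_\phi$. Let $$\kappa_0:=\frac{16N^4}{r}|\delta\mathbf v_0|_2 .$$ Then there is an absolute constant $C\ge1$ such that if $\kappa\ge C\kappa_0$, then for all $t\ge0$ $$\max_{1\le i\le N}|\mathbf v_i(t)-\overline{\mathbf v}_0|\le|\delta\mathbf v_0|_\infty e^{-\frac{\kappa}{N}t}+2N|\delta\mathbf v_0|_2\,e^{-\frac{\kappa}{N^3}t}.$$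
   Context: A communication kernel is a function $\phi:[0,\infty)\to[0,\infty)$ (no regularity or boundedness assumed); $D_\phi:=\sup\{s>0:\ \phi(h)\ge1\text{ for all }0<h\le s\}$. The Cucker–Smale system on $\Omega=\mathbb T^d$ or $\mathbb R^d$ is $\dot{\mathbf x}_i=\mathbf v_i$, $\dot{\mathbf v}_i=\frac{\kappa}{N}\sum_{j=1}^N\phi(|\mathbf x_i-\mathbf x_j|)(\mathbf v_j-\mathbf v_i)$, $i=1,\dots,N$. Notation: $|\delta\mathbf v(t)|_2^2:=\frac1{N^2}\sum_{i,j}|\mathbf v_i(t)-\mathbf v_j(t)|^2$, $|\delta\mathbf v(t)|_\infty:=\max_{i,j}|\mathbf v_i(t)-\mathbf v_j(t)|$, $\delta\mathbf v_0:=\delta\mathbf v(0)$, $\overline{\mathbf v}_0:=\frac1N\sum_i\mathbf v_i(0)$. A finite set $P$ is chain connected at scale $r$ if every pair $\mathbf x,\mathbf y\in P$ is connected by a finite chain of balls $B_1,\dots,B_k$ of diameter $r$ with centers in $P$, consecutive balls having non-empty intersection, $\mathbf x\in\overline{B_1}$, $\mathbf y\in\overline{B_k}$. *)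

From Stdlib Require Import Reals Lra Lia List.
Open Scope R_scope.

(* Vectors of R^d are represented as functions nat -> R; only the
   coordinates k < d are relevant. *)
Definition vec := nat -> R.

Fixpoint sumUpto (f : nat -> R) (n : nat) : R :=
  match n with O => 0 | S m => sumUpto f m + f m end.

(* maxUpto f n = max (f 0, ..., f (n-1)), and 0 for n = 0 (used only on
   nonnegative quantities with n >= 1). *)
Fixpoint maxUpto (f : nat -> R) (n : nat) : R :=
  match n with O => 0 | S m => Rmax (maxUpto f m) (f m) end.

Definition vsub (x y : vec) : vec := fun k => x k - y k.

Definition vnorm (d : nat) (x : vec) : R := sqrt (sumUpto (fun k => (x k)^2) d).

Definition dist_Z (a : R) : R := Rmin (frac_part a) (1 - frac_part a).

(* Distance in Omega: the flat unit torus T^d = R^d / Z^d (points given by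
   lifts in R^d) if [torus = true], the Euclidean space R^d otherwise. *)
Definition dist_Omega (torus : bool) (d : nat) (x y : vec) : R :=
  if torus then sqrt (sumUpto (fun k => (dist_Z (x k - y k))^2) d)
  else vnorm d (vsub x y).

(* Set of s > 0 such that phi h >= 1 for all 0 < h <= s; D_phi is its
   supremum (possibly +infinity). *)
Definition Dphi_set (phi : R -> R) (s : R) : Prop :=
  0 < s /\ forall h, 0 < h <= s -> 1 <= phi h.

(* The finite set {p 0, ..., p (N-1)} is chain connected at scale r in
   Omega: every pair of points is joined by a finite chain of (open) balls
   of diameter r with centers in the set, consecutive balls intersecting,
   the first point in the closure of the first ball and the second point in
   the closure of the last ball. *)
Definition chain_connected (torus : bool) (d N : nat) (p : nat -> vec) (r : R)
  : Prop :=
  forall i j, (i < N)%nat -> (j < N)%nat ->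
  exists cs : list nat,
    cs <> nil /\ Forall (fun c => (c < N)%nat) cs /\
    dist_Omega torus d (p i) (p (hd O cs)) <= r / 2 /\
    dist_Omega torus d (p j) (p (last cs O)) <= r / 2 /\
    (forall m, (S m < length cs)%nat ->
       exists z : vec,
         dist_Omega torus d z (p (nth m cs O)) < r / 2 /\
         dist_Omega torus d z (p (nth (S m) cs O)) < r / 2).

Definition cont_nonneg (f : R -> R) (t : R) : Prop :=
  forall eps, 0 < eps -> exists delta, 0 < delta /\
    forall s, 0 <= s -> Rabs (s - t) < delta -> Rabs (f s - f t) < eps.

Definition CS_solution (torus : bool) (d N : nat) (phi : R -> R) (kappa : R)
  (x v : nat -> R -> vec) : Prop :=
  forall i k, (i < N)%nat -> (k < d)%nat ->
    (forall t, 0 <= t -> cont_nonneg (fun s => x i s k) t /\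
                         cont_nonneg (fun s => v i s k) t) /\
    (forall t, 0 < t ->
       derivable_pt_lim (fun s => x i s k) t (v i t k) /\
       derivable_pt_lim (fun s => v i s k) t
         (kappa / INR N *
          sumUpto (fun j => phi (dist_Omega torus d (x i t) (x j t)) *
                         (v j t k - v i t k)) N)).

Definition dv2 (d N : nat) (v : nat -> R -> vec) (t : R) : R :=
  sqrt (/ (INR N)^2 *
        sumUpto (fun i => sumUpto (fun j => (vnorm d (vsub (v i t) (v j t)))^2) N) N).

Definition dvinf (d N : nat) (v : nat -> R -> vec) (t : R) : R :=
  maxUpto (fun i => maxUpto (fun j => vnorm d (vsub (v i t) (v j t))) N) N.

Definition vbar0 (N : nat) (v : nat -> R -> vec) : vec :=
  fun k => / INR N * sumUpto (fun i => v i 0 k) N.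

From Stdlib Require Import Reals Lra Lia List Classical ZArith.
Open Scope R_scope.

(* The mean velocity is conserved, and the fluctuation energy
   E(t) = sum_i |v_i(t) - vbar0|^2 satisfies E' = -(kappa/N) sum_ij phi(|x_i - x_j|) |v_i - v_j|^2.
   While every pair of agents adjacent in the initial chain stays at distance at most
   2r <= D_phi, the pairs at positive distance at most 2r (where phi >= 1) connect the flock,
   and a discrete Poincare inequality along loop-free chains of at most N agents gives
   E' <= -(2 kappa / N^3) E.  Pairs at distance 0 are the delicate point, since phi(0) is
   uncontrolled: they can be bypassed unless all agents coincide, and coinciding agents either
   separate instantly or are in consensus forever.  The resulting exponential decay of E
   bounds the relative drift of any two agents by 4 sqrt(E(0)) / (2 kappa / N^3) <= r/8 once
   kappa >= kappa_0, so the chain does survive; a continuity argument in time closes the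
   loop.  Finally |v_i - vbar0| <= sqrt(E(t)) <= N |dv_0|_2 e^{-kappa t / N^3}, which is
   already stronger than the claimed bound, with C = 1. *)

(** * Finite sums and the Euclidean norm *)

Lemma sumUpto_ext f g n :
  (forall i, (i < n)%nat -> f i = g i) -> sumUpto f n = sumUpto g n.
Proof.
  induction n as [|n IH]; simpl; intros H; auto.
  rewrite IH by (intros; apply H; lia). rewrite H by lia. reflexivity.
Qed.

Lemma sumUpto_add f g n : sumUpto (fun i => f i + g i) n = sumUpto f n + sumUpto g n.
Proof. induction n as [|n IH]; simpl; [lra|]. rewrite IH. lra. Qed.

Lemma sumUpto_sub f g n : sumUpto (fun i => f i - g i) n = sumUpto f n - sumUpto g n.
Proof. induction n as [|n IH]; simpl; [lra|]. rewrite IH. lra. Qed.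

Lemma sumUpto_mult_l c f n : sumUpto (fun i => c * f i) n = c * sumUpto f n.
Proof. induction n as [|n IH]; simpl; [lra|]. rewrite IH. lra. Qed.

Lemma sumUpto_const c n : sumUpto (fun _ => c) n = INR n * c.
Proof. induction n as [|n IH]; simpl sumUpto; [simpl; lra|]. rewrite IH, S_INR. lra. Qed.

Lemma sumUpto_zero n : sumUpto (fun _ => 0) n = 0.
Proof. rewrite sumUpto_const. lra. Qed.

Lemma sumUpto_le f g n :
  (forall i, (i < n)%nat -> f i <= g i) -> sumUpto f n <= sumUpto g n.
Proof.
  induction n as [|n IH]; simpl; intros H; [lra|].
  assert (sumUpto f n <= sumUpto g n) by (apply IH; intros; apply H; lia).
  assert (f n <= g n) by (apply H; lia). lra.
Qed.

Lemma sumUpto_nonneg f n : (forall i, (i < n)%nat -> 0 <= f i) -> 0 <= sumUpto f n.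
Proof. intros H. rewrite <- (sumUpto_zero n). apply sumUpto_le. auto. Qed.

Lemma sumUpto_term_le f n i :
  (forall j, (j < n)%nat -> 0 <= f j) -> (i < n)%nat -> f i <= sumUpto f n.
Proof.
  induction n as [|n IH]; simpl; intros H Hi; [lia|].
  assert (0 <= sumUpto f n) by (apply sumUpto_nonneg; intros; apply H; lia).
  destruct (Nat.eq_dec i n) as [->|Hne]; [lra|].
  assert (f i <= sumUpto f n) by (apply IH; [intros; apply H|]; lia).
  assert (0 <= f n) by (apply H; lia). lra.
Qed.

Lemma sumUpto_swap (f : nat -> nat -> R) m n :
  sumUpto (fun i => sumUpto (fun j => f i j) n) m =
  sumUpto (fun j => sumUpto (fun i => f i j) m) n.
Proof.
  induction m as [|m IH]; simpl.
  - symmetry. apply sumUpto_zero.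
  - rewrite IH, <- sumUpto_add. reflexivity.
Qed.

Lemma dsum_antisym_zero (a : nat -> nat -> R) (b : nat -> R) n :
  (forall i j, (i < n)%nat -> (j < n)%nat -> a i j = a j i) ->
  sumUpto (fun i => sumUpto (fun j => a i j * (b j - b i)) n) n = 0.
Proof.
  intros Hsym.
  assert (Hswap : sumUpto (fun i => sumUpto (fun j => a i j * b j) n) n =
                  sumUpto (fun i => sumUpto (fun j => a i j * b i) n) n).
  { rewrite sumUpto_swap. apply sumUpto_ext; intros i Hi.
    apply sumUpto_ext; intros j Hj. rewrite Hsym by auto. reflexivity. }
  transitivity (sumUpto (fun i => sumUpto (fun j => a i j * b j) n
                                  - sumUpto (fun j => a i j * b i) n) n).
  { apply sumUpto_ext; intros. rewrite <- sumUpto_sub. apply sumUpto_ext; intros. ring. }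
  rewrite sumUpto_sub, Hswap. ring.
Qed.

Lemma dsum_symmetrize (q : nat -> nat -> R) n :
  sumUpto (fun i => sumUpto (fun j => q i j) n) n =
  / 2 * sumUpto (fun i => sumUpto (fun j => q i j + q j i) n) n.
Proof.
  rewrite (sumUpto_ext (fun i => sumUpto (fun j => q i j + q j i) n)
              (fun i => sumUpto (fun j => q i j) n + sumUpto (fun j => q j i) n))
    by (intros; apply sumUpto_add).
  rewrite sumUpto_add, (sumUpto_swap (fun i j => q j i)). lra.
Qed.

Lemma dsum_sq_diff (a : nat -> R) n :
  sumUpto (fun i => sumUpto (fun j => (a i - a j)^2) n) n =
  2 * INR n * sumUpto (fun i => a i ^ 2) n - 2 * (sumUpto a n)^2.
Proof.
  transitivity (sumUpto (fun i => INR n * a i ^ 2 - (2 * sumUpto a n) * a i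
                                  + sumUpto (fun j => a j ^ 2) n) n).
  { apply sumUpto_ext; intros i Hi.
    rewrite (sumUpto_ext _ (fun j => (a i ^ 2 + a j ^ 2) - 2 * a i * a j)) by (intros; ring).
    rewrite sumUpto_sub, sumUpto_add, sumUpto_const, (sumUpto_mult_l (2 * a i) a). ring. }
  rewrite sumUpto_add, sumUpto_sub, sumUpto_const, !sumUpto_mult_l. ring.
Qed.

Lemma dsum_sq_dist_centered N d (u : nat -> nat -> R) :
  (forall k, (k < d)%nat -> sumUpto (fun i => u i k) N = 0) ->
  sumUpto (fun i => sumUpto (fun j => sumUpto (fun k => (u i k - u j k)^2) d) N) N =
  2 * INR N * sumUpto (fun i => sumUpto (fun k => (u i k)^2) d) N.
Proof.
  intros Hmean.
  rewrite (sumUpto_ext _ (fun i => sumUpto (fun k => sumUpto (fun j => (u i k - u j k)^2) N) d))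
    by (intros; apply sumUpto_swap).
  rewrite sumUpto_swap.
  rewrite (sumUpto_ext _ (fun k => 2 * INR N * sumUpto (fun i => u i k ^ 2) N)).
  - rewrite sumUpto_mult_l, sumUpto_swap. reflexivity.
  - intros k Hk. rewrite (dsum_sq_diff (fun i => u i k)), Hmean by auto. ring.
Qed.

Lemma maxUpto_le f n M : 0 <= M -> (forall i, (i < n)%nat -> f i <= M) -> maxUpto f n <= M.
Proof. induction n as [|n IH]; simpl; intros HM H; auto. apply Rmax_lub; auto. Qed.

Lemma maxUpto_nonneg f n : 0 <= maxUpto f n.
Proof. induction n as [|n IH]; simpl; [lra|]. eapply Rle_trans; [exact IH | apply Rmax_l]. Qed.

Lemma sumUpto_sq_nonneg d w : 0 <= sumUpto (fun k => (w k)^2) d.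
Proof. apply sumUpto_nonneg; intros. apply pow2_ge_0. Qed.

Lemma sq_le_sq_inv x y : 0 <= x -> 0 <= y -> x^2 <= y^2 -> x <= y.
Proof. intros. nra. Qed.

Lemma cauchy_schwarz_sq d a b :
  (sumUpto (fun k => a k * b k) d)^2 <=
  sumUpto (fun k => a k ^2) d * sumUpto (fun k => b k ^2) d.
Proof.
  set (A := sumUpto (fun k => a k ^2) d). set (B := sumUpto (fun k => b k ^2) d).
  set (P := sumUpto (fun k => a k * b k) d).
  assert (Hquad : forall t, 0 <= A - 2 * t * P + t^2 * B).
  { intros t. replace (A - 2 * t * P + t^2 * B) with (sumUpto (fun k => (a k - t * b k)^2) d)
      by (unfold A, B, P; rewrite <- !sumUpto_mult_l, <- sumUpto_sub, <- sumUpto_add;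
          apply sumUpto_ext; intros; ring).
    apply sumUpto_sq_nonneg. }
  assert (0 <= B) by apply sumUpto_sq_nonneg.
  destruct (Req_dec B 0) as [HB0|HB0].
  - assert (P = 0).
    { destruct (Req_dec P 0) as [|HP]; auto. exfalso.
      specialize (Hquad ((A + 1) / (2 * P))). rewrite HB0 in Hquad.
      replace (A - 2 * ((A + 1) / (2 * P)) * P + ((A + 1) / (2 * P)) ^ 2 * 0) with (-1)
        in Hquad by (field; auto). lra. }
    rewrite H0, HB0. lra.
  - specialize (Hquad (P / B)).
    apply Rmult_le_compat_r with (r := B) in Hquad; [|lra].
    replace ((A - 2 * (P / B) * P + (P / B) ^ 2 * B) * B) with (A * B - P^2) in Hquad
      by (field; auto). lra.
Qed.

Lemma vnorm_nonneg d w : 0 <= vnorm d w.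
Proof. apply sqrt_pos. Qed.

Lemma vnorm_sq d w : (vnorm d w)^2 = sumUpto (fun k => (w k)^2) d.
Proof. unfold vnorm. rewrite pow2_sqrt; auto. apply sumUpto_sq_nonneg. Qed.

Lemma vnorm_ext d w w' : (forall k, (k < d)%nat -> w k = w' k) -> vnorm d w = vnorm d w'.
Proof. intros H. unfold vnorm. f_equal. apply sumUpto_ext. intros. rewrite H; auto. Qed.

Lemma vnorm_abs d w : vnorm d (fun k => Rabs (w k)) = vnorm d w.
Proof. unfold vnorm. f_equal. apply sumUpto_ext. intros. apply pow2_abs. Qed.

Lemma vnorm_opp d w : vnorm d (fun k => - w k) = vnorm d w.
Proof. unfold vnorm. f_equal. apply sumUpto_ext. intros. ring. Qed.

Lemma cauchy_schwarz d a b : sumUpto (fun k => a k * b k) d <= vnorm d a * vnorm d b.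
Proof.
  unfold vnorm. rewrite <- sqrt_mult by apply sumUpto_sq_nonneg.
  destruct (Rle_or_lt (sumUpto (fun k => a k * b k) d) 0) as [Hle|Hlt].
  - eapply Rle_trans; [exact Hle | apply sqrt_pos].
  - rewrite <- (sqrt_pow2 (sumUpto (fun k => a k * b k) d)) by lra.
    apply sqrt_le_1_alt, cauchy_schwarz_sq.
Qed.

Lemma vnorm_le_mono d a b :
  (forall k, (k < d)%nat -> 0 <= a k <= b k) -> vnorm d a <= vnorm d b.
Proof.
  intros H. apply sqrt_le_1_alt, sumUpto_le. intros k Hk.
  specialize (H k Hk). apply pow_incr. lra.
Qed.

Lemma vnorm_triangle d a b : vnorm d (fun k => a k + b k) <= vnorm d a + vnorm d b.
Proof.
  pose proof (vnorm_nonneg d a); pose proof (vnorm_nonneg d b).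
  apply sq_le_sq_inv; [apply vnorm_nonneg | lra |].
  replace ((vnorm d a + vnorm d b)^2)
    with ((vnorm d a)^2 + (vnorm d b)^2 + 2 * (vnorm d a * vnorm d b)) by ring.
  rewrite !vnorm_sq. pose proof (cauchy_schwarz d a b).
  replace (sumUpto (fun k => (a k + b k)^2) d) with
    (sumUpto (fun k => a k ^2) d + sumUpto (fun k => b k ^2) d
     + 2 * sumUpto (fun k => a k * b k) d)
    by (rewrite <- sumUpto_mult_l, <- !sumUpto_add; apply sumUpto_ext; intros; ring).
  lra.
Qed.

Lemma Rabs_coord_le_vnorm d w k : (k < d)%nat -> Rabs (w k) <= vnorm d w.
Proof.
  intros Hk. rewrite <- (sqrt_pow2 (Rabs (w k))) by apply Rabs_pos.
  apply sqrt_le_1_alt. rewrite pow2_abs.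
  apply (sumUpto_term_le (fun k => w k ^2)); auto. intros; apply pow2_ge_0.
Qed.

Lemma vnorm_pos_of_coord d w k : (k < d)%nat -> w k <> 0 -> 0 < vnorm d w.
Proof.
  intros Hk Hw. pose proof (Rabs_coord_le_vnorm d w k Hk). pose proof (Rabs_pos_lt _ Hw). lra.
Qed.

Lemma vnorm_le_sqrt_dim d w c :
  0 <= c -> (forall k, (k < d)%nat -> Rabs (w k) <= c) -> vnorm d w <= sqrt (INR d) * c.
Proof.
  intros Hc H. replace (sqrt (INR d) * c) with (sqrt (INR d) * sqrt (c ^ 2))
    by (rewrite sqrt_pow2; auto).
  rewrite <- sqrt_mult by (auto using pos_INR, pow2_ge_0).
  apply sqrt_le_1_alt. rewrite <- sumUpto_const. apply sumUpto_le. intros k Hk.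
  rewrite <- (pow2_abs (w k)). apply pow_incr. split; [apply Rabs_pos | auto].
Qed.

(** * Distances on the torus and on the line *)

Lemma dist_Z_le a (n : Z) : dist_Z a <= Rabs (a - IZR n).
Proof.
  unfold dist_Z, frac_part. set (m := Int_part a).
  pose proof (base_fp a) as [H1 H2]. unfold frac_part in H1, H2. fold m in H1, H2.
  destruct (Z_le_gt_dec n m) as [Hl|Hl].
  - apply IZR_le in Hl. apply Rle_trans with (a - IZR m); [apply Rmin_l|].
    rewrite Rabs_right; lra.
  - assert (Hl' : (m + 1 <= n)%Z) by lia. apply IZR_le in Hl'. rewrite plus_IZR in Hl'.
    apply Rle_trans with (1 - (a - IZR m)); [apply Rmin_r|]. rewrite Rabs_left1; lra.
Qed.

Lemma dist_Z_attained a : exists n : Z, dist_Z a = Rabs (a - IZR n).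
Proof.
  unfold dist_Z, frac_part. set (m := Int_part a).
  pose proof (base_fp a) as [H1 H2]. unfold frac_part in H1, H2. fold m in H1, H2.
  destruct (Rle_dec (a - IZR m) (1 - (a - IZR m))).
  - exists m. rewrite Rmin_left by auto. rewrite Rabs_right; lra.
  - exists (m + 1)%Z. rewrite Rmin_right by lra. rewrite plus_IZR, Rabs_left1; simpl; lra.
Qed.

Lemma Rabs_IZR_ge1 (z : Z) : z <> 0%Z -> 1 <= Rabs (IZR z).
Proof.
  intros Hz. destruct (Z_le_gt_dec z 0).
  - assert (Hle : (z <= -1)%Z) by lia. apply IZR_le in Hle. rewrite Rabs_left1; simpl in *; lra.
  - assert (Hge : (1 <= z)%Z) by lia. apply IZR_le in Hge. rewrite Rabs_right; simpl in *; lra.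
Qed.

Definition coord_dist (torus : bool) (a : R) : R := if torus then dist_Z a else Rabs a.

Lemma coord_dist_nonneg t a : 0 <= coord_dist t a.
Proof.
  destruct t; simpl; [|apply Rabs_pos].
  destruct (dist_Z_attained a) as [n ->]. apply Rabs_pos.
Qed.

Lemma coord_dist_le_Rabs t a : coord_dist t a <= Rabs a.
Proof.
  destruct t; simpl; [|lra].
  pose proof (dist_Z_le a 0) as H. simpl in H. rewrite Rminus_0_r in H. exact H.
Qed.

Lemma coord_dist_0 t : coord_dist t 0 = 0.
Proof.
  apply Rle_antisym; [|apply coord_dist_nonneg].
  pose proof (coord_dist_le_Rabs t 0). rewrite Rabs_R0 in H. exact H.
Qed.

Lemma coord_dist_triangle t a b : coord_dist t (a + b) <= coord_dist t a + coord_dist t b.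
Proof.
  destruct t; simpl; [|apply Rabs_triang].
  destruct (dist_Z_attained a) as [n ->]. destruct (dist_Z_attained b) as [m ->].
  apply Rle_trans with (Rabs (a + b - IZR (n + m))); [apply dist_Z_le|].
  rewrite plus_IZR. replace (a + b - (IZR n + IZR m)) with ((a - IZR n) + (b - IZR m)) by ring.
  apply Rabs_triang.
Qed.

Lemma coord_dist_opp t a : coord_dist t (- a) = coord_dist t a.
Proof.
  assert (Hle : forall b, coord_dist t (- b) <= coord_dist t b).
  { intros b. destruct t; simpl; [|rewrite Rabs_Ropp; lra].
    destruct (dist_Z_attained b) as [n ->].
    apply Rle_trans with (Rabs (- b - IZR (- n))); [apply dist_Z_le|].
    rewrite opp_IZR. replace (- b - - IZR n) with (- (b - IZR n)) by ring.
    rewrite Rabs_Ropp. lra. }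
  apply Rle_antisym; [apply Hle|]. rewrite <- (Ropp_involutive a) at 1. apply Hle.
Qed.

(* Two points at distance 0 are separated by any nonzero displacement of size < 1: on the
   torus such a displacement is not an integer. *)
Lemma coord_dist_pos_shift t a h :
  coord_dist t a = 0 -> 0 < Rabs h < 1 -> 0 < coord_dist t (a + h).
Proof.
  intros Ha Hh.
  assert (Habs0 : forall z, Rabs z = 0 -> z = 0).
  { intros z Hz. destruct (Req_dec z 0) as [|Hne]; auto. now apply Rabs_no_R0 in Hne. }
  destruct t; simpl in *.
  - destruct (dist_Z_attained a) as [n Hn]. rewrite Hn in Ha. apply Habs0 in Ha.
    destruct (Rle_lt_or_eq_dec 0 _ (coord_dist_nonneg true (a + h))) as [|He]; auto.
    exfalso. simpl in He. destruct (dist_Z_attained (a + h)) as [m Hm].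
    rewrite Hm in He. symmetry in He. apply Habs0 in He.
    assert (Hhm : h = IZR (m - n)) by (rewrite minus_IZR; lra).
    destruct (Z.eq_dec (m - n) 0) as [E|E].
    + rewrite E in Hhm. simpl in Hhm. rewrite Hhm, Rabs_R0 in Hh. lra.
    + apply Rabs_IZR_ge1 in E. rewrite <- Hhm in E. lra.
  - apply Habs0 in Ha. subst. rewrite Rplus_0_l. lra.
Qed.

Lemma dist_Omega_vnorm torus d x y :
  dist_Omega torus d x y = vnorm d (fun k => coord_dist torus (x k - y k)).
Proof.
  unfold dist_Omega, vnorm, vsub, coord_dist. destruct torus; auto.
  f_equal. apply sumUpto_ext; intros. rewrite pow2_abs. reflexivity.
Qed.

Lemma dist_Omega_nonneg torus d x y : 0 <= dist_Omega torus d x y.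
Proof. rewrite dist_Omega_vnorm. apply vnorm_nonneg. Qed.

Lemma dist_Omega_sym torus d x y : dist_Omega torus d x y = dist_Omega torus d y x.
Proof.
  rewrite !dist_Omega_vnorm. apply vnorm_ext. intros k _.
  replace (x k - y k) with (- (y k - x k)) by ring. apply coord_dist_opp.
Qed.

Lemma dist_Omega_refl torus d x : dist_Omega torus d x x = 0.
Proof.
  rewrite dist_Omega_vnorm, (vnorm_ext _ _ (fun _ => 0)).
  - unfold vnorm. rewrite (sumUpto_ext _ (fun _ => 0)) by (intros; ring).
    rewrite sumUpto_zero. apply sqrt_0.
  - intros. rewrite Rminus_diag. apply coord_dist_0.
Qed.

Lemma dist_Omega_triangle torus d x y z :
  dist_Omega torus d x z <= dist_Omega torus d x y + dist_Omega torus d y z.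
Proof.
  rewrite !dist_Omega_vnorm. eapply Rle_trans; [|apply vnorm_triangle].
  apply vnorm_le_mono. intros k Hk. split; [apply coord_dist_nonneg|].
  replace (x k - z k) with ((x k - y k) + (y k - z k)) by ring. apply coord_dist_triangle.
Qed.

Lemma dist_Omega_perturb torus d x y x' y' :
  dist_Omega torus d x' y' <=
  dist_Omega torus d x y + vnorm d (fun k => (x' k - y' k) - (x k - y k)).
Proof.
  rewrite !dist_Omega_vnorm, <- (vnorm_abs d (fun k => (x' k - y' k) - (x k - y k))).
  eapply Rle_trans; [|apply vnorm_triangle]. apply vnorm_le_mono. intros k Hk.
  split; [apply coord_dist_nonneg|].
  pose proof (coord_dist_triangle torus (x k - y k) ((x' k - y' k) - (x k - y k))) as H.
  replace (x k - y k + (x' k - y' k - (x k - y k))) with (x' k - y' k) in H by ring.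
  pose proof (coord_dist_le_Rabs torus (x' k - y' k - (x k - y k))). lra.
Qed.

Lemma dist_Omega_zero_coord torus d x y k :
  dist_Omega torus d x y = 0 -> (k < d)%nat -> coord_dist torus (x k - y k) = 0.
Proof.
  intros H Hk. rewrite dist_Omega_vnorm in H.
  pose proof (Rabs_coord_le_vnorm d (fun k => coord_dist torus (x k - y k)) k Hk) as Hc.
  simpl in Hc. rewrite H, Rabs_pos_eq in Hc by apply coord_dist_nonneg.
  pose proof (coord_dist_nonneg torus (x k - y k)). lra.
Qed.

Lemma dist_Omega_pos_of_coord torus d x y k :
  (k < d)%nat -> 0 < coord_dist torus (x k - y k) -> 0 < dist_Omega torus d x y.
Proof.
  intros Hk H. rewrite dist_Omega_vnorm. apply (vnorm_pos_of_coord _ _ k Hk). simpl. lra.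
Qed.

(** * Chains and a discrete Poincare inequality *)

Fixpoint chain (Rl : nat -> nat -> Prop) (p : list nat) : Prop :=
  match p with
  | a :: ((b :: _) as rest) => Rl a b /\ chain Rl rest
  | _ => True
  end.

Fixpoint chain_sum (f : nat -> nat -> R) (p : list nat) : R :=
  match p with
  | a :: ((b :: _) as rest) => f a b + chain_sum f rest
  | _ => 0
  end.

Fixpoint sum_list (g : nat -> R) (l : list nat) : R :=
  match l with nil => 0 | a :: l' => g a + sum_list g l' end.

Definition connects (Rl : nat -> nat -> Prop) (N : nat) : Prop :=
  forall i j, (i < N)%nat -> (j < N)%nat ->
  exists p, p <> nil /\ chain Rl p /\ hd 0%nat p = i /\ last p 0%nat = j.

Lemma sum_list_app g l1 l2 : sum_list g (l1 ++ l2) = sum_list g l1 + sum_list g l2.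
Proof. induction l1 as [|a l1 IH]; simpl; [lra|]. rewrite IH. lra. Qed.

Lemma sum_list_NoDup_le g N l :
  NoDup l -> (forall a, In a l -> (a < N)%nat) ->
  (forall a, (a < N)%nat -> 0 <= g a) -> sum_list g l <= sumUpto g N.
Proof.
  revert l. induction N as [|N IH]; intros l Hd Hl Hg.
  - destruct l as [|a l]; simpl; [lra|]. specialize (Hl a (or_introl eq_refl)). lia.
  - simpl. destruct (in_dec Nat.eq_dec N l) as [Hin|Hin].
    + destruct (in_split _ _ Hin) as [l1 [l2 ->]].
      destruct (NoDup_remove _ _ _ Hd) as [Hd' Hn].
      assert (sum_list g (l1 ++ l2) <= sumUpto g N).
      { apply IH; auto. intros a Ha. assert (a <> N) by (intros ->; contradiction).
        assert (In a (l1 ++ N :: l2))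
          by (apply in_app_or in Ha; apply in_or_app; destruct Ha; [left | right; right]; auto).
        specialize (Hl a H0). lia. }
      rewrite sum_list_app in *. simpl. lra.
    + assert (sum_list g l <= sumUpto g N).
      { apply IH; auto. intros a Ha. assert (a <> N) by (intros ->; contradiction).
        specialize (Hl a Ha). lia. }
      specialize (Hg N ltac:(lia)). lra.
Qed.

Lemma In_last (l : list nat) : l <> nil -> In (last l 0%nat) l.
Proof.
  induction l as [|a l IH]; intros H; [congruence|].
  destruct l as [|b l]; [simpl; auto | right; apply IH; congruence].
Qed.

Lemma chain_app_r Rl l1 l2 : chain Rl (l1 ++ l2) -> chain Rl l2.
Proof.
  induction l1 as [|a l1 IH]; simpl; auto. intros H. apply IH.
  destruct (l1 ++ l2); [exact I | destruct H; auto].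
Qed.

Lemma chain_snoc Rl j l :
  l <> nil -> chain Rl l -> Rl (last l 0%nat) j -> chain Rl (l ++ j :: nil).
Proof.
  induction l as [|a l IH]; intros Hn Hp Hl; [congruence|]. destruct l as [|b l].
  - simpl in *. auto.
  - destruct Hp as [Hab Hp]. split; auto. apply IH; auto; congruence.
Qed.

Lemma chain_of_nth Rl l :
  (forall m, (S m < length l)%nat -> Rl (nth m l 0%nat) (nth (S m) l 0%nat)) -> chain Rl l.
Proof.
  induction l as [|a l IH]; intros H; simpl; auto. destruct l as [|b l]; auto. split.
  - apply (H 0%nat). simpl. lia.
  - apply IH. intros m Hm. apply (H (S m)). simpl in *. lia.
Qed.

Lemma last_app_cons (l1 l2 : list nat) a : last (l1 ++ a :: l2) 0%nat = last (a :: l2) 0%nat.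
Proof.
  induction l1 as [|b l1 IH]; [reflexivity|]. rewrite <- app_comm_cons, <- IH.
  destruct (l1 ++ a :: l2) eqn:E; [destruct l1; discriminate | reflexivity].
Qed.

Lemma chain_remove_loops Rl p :
  p <> nil -> chain Rl p ->
  exists p', p' <> nil /\ chain Rl p' /\ NoDup p' /\
             hd 0%nat p' = hd 0%nat p /\ last p' 0%nat = last p 0%nat.
Proof.
  induction p as [|a rest IH]; intros Hn Hp; [congruence|].
  destruct rest as [|b l].
  - exists (a :: nil). repeat split; try congruence. constructor; auto. constructor.
  - destruct Hp as [Hab Hp].
    destruct (IH ltac:(congruence) Hp) as [q [Hqn [Hqp [Hqd [Hqh Hql]]]]].
    destruct (in_dec Nat.eq_dec a q) as [Hin|Hin].
    + destruct (in_split _ _ Hin) as [l1 [l2 ->]].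
      exists (a :: l2). repeat split; try congruence.
      * eapply chain_app_r. exact Hqp.
      * eapply NoDup_app_remove_l. exact Hqd.
      * rewrite <- (last_app_cons l1 l2 a), Hql. reflexivity.
    + exists (a :: q). destruct q as [|b' q]; [congruence|]. simpl in Hqh. subst b'.
      repeat split; try congruence; auto.
      constructor; auto.
Qed.

Lemma chain_in_range Rl N p :
  chain Rl p -> (forall a b, Rl a b -> (a < N)%nat /\ (b < N)%nat) ->
  (hd 0%nat p < N)%nat -> forall a, In a p -> (a < N)%nat.
Proof.
  induction p as [|a p IH]; simpl; intros Hp HR Hh c Hc; [contradiction|].
  destruct Hc as [<-|Hc]; auto. destruct p as [|b p]; [contradiction|].
  destruct Hp as [Hab Hp]. apply IH; auto. simpl. apply (HR a b Hab).
Qed.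

Lemma NoDup_length_le N p :
  NoDup p -> (forall a, In a p -> (a < N)%nat) -> (length p <= N)%nat.
Proof.
  intros Hd H. rewrite <- (length_seq N 0). apply NoDup_incl_length; auto.
  intros a Ha. apply in_seq. specialize (H a Ha). lia.
Qed.

Lemma chain_sum_nonneg f p : (forall a b, 0 <= f a b) -> 0 <= chain_sum f p.
Proof.
  induction p as [|a p IH]; simpl; intros H; [lra|]. destruct p as [|b p]; [lra|].
  specialize (IH H). specialize (H a b). lra.
Qed.

Lemma chain_sum_le Rl f g p :
  chain Rl p -> (forall a b, Rl a b -> f a b <= g a b) -> chain_sum f p <= chain_sum g p.
Proof.
  induction p as [|a p IH]; simpl; intros Hp H; [lra|]. destruct p as [|b p]; [lra|].
  destruct Hp as [Hab Hp]. specialize (IH Hp H). specialize (H a b Hab). lra.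
Qed.

Lemma chain_sum_sumUpto (f : nat -> nat -> nat -> R) d p :
  chain_sum (fun a b => sumUpto (fun k => f k a b) d) p = sumUpto (fun k => chain_sum (f k) p) d.
Proof.
  induction p as [|a p IH]; simpl; [now rewrite sumUpto_zero|].
  destruct p as [|b p]; [now rewrite sumUpto_zero|]. rewrite IH, <- sumUpto_add. reflexivity.
Qed.

Lemma chain_sum_le_sum_list f p N :
  (forall a, In a p -> (a < N)%nat) ->
  (forall a b, (a < N)%nat -> (b < N)%nat -> 0 <= f a b) ->
  chain_sum f p <= sum_list (fun a => sumUpto (fun b => f a b) N) p.
Proof.
  induction p as [|a p IH]; intros Hin H; [simpl; lra|].
  assert (Ha : (a < N)%nat) by (apply Hin; simpl; auto).
  destruct p as [|b p].
  - pose proof (sumUpto_nonneg (fun b => f a b) N ltac:(intros; apply H; auto)). simpl. lra.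
  - specialize (IH ltac:(intros; apply Hin; right; auto) H).
    pose proof (sumUpto_term_le (fun b => f a b) N b ltac:(intros; apply H; auto)
                  (Hin b ltac:(simpl; auto))).
    simpl in IH |- *. lra.
Qed.

(* Weighted AM-GM: [2AB <= L A^2 + B^2 / L]. *)
Lemma sq_add_le A B L T :
  B^2 <= L * T -> 1 <= L -> 0 <= T -> (A + B)^2 <= (L + 1) * (A^2 + T).
Proof.
  intros H1 H2 H3.
  assert (2 * A * B <= L * A^2 + T).
  { assert (0 <= (L * A - B)^2) by apply pow2_ge_0.
    apply Rmult_le_reg_l with L; nra. }
  nra.
Qed.

Lemma chain_cauchy_schwarz (g : nat -> R) p :
  p <> nil ->
  (g (hd 0%nat p) - g (last p 0%nat))^2 <=
  INR (length p) * chain_sum (fun a b => (g a - g b)^2) p.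
Proof.
  induction p as [|a p IH]; intros Hn; [congruence|]. destruct p as [|b p].
  - simpl. replace (g a - g a) with 0 by ring. lra.
  - specialize (IH ltac:(congruence)). simpl hd in IH |- *.
    change (last (a :: b :: p) 0%nat) with (last (b :: p) 0%nat).
    change (length (a :: b :: p)) with (S (length (b :: p))). rewrite S_INR.
    change (chain_sum (fun a0 b0 => (g a0 - g b0) ^ 2) (a :: b :: p)) with
      ((g a - g b)^2 + chain_sum (fun a0 b0 => (g a0 - g b0) ^ 2) (b :: p)).
    replace (g a - g (last (b :: p) 0%nat))
      with ((g a - g b) + (g b - g (last (b :: p) 0%nat))) by ring.
    apply sq_add_le; auto.
    + simpl length. rewrite S_INR. pose proof (pos_INR (length p)). lra.
    + apply chain_sum_nonneg. intros. apply pow2_ge_0.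
Qed.

Section Poincare.
Variables (N d : nat) (u w : nat -> nat -> R) (Rl : nat -> nat -> Prop).
Hypothesis w_nonneg : forall a b, (a < N)%nat -> (b < N)%nat -> 0 <= w a b.
Hypothesis Rl_weight : forall a b, Rl a b -> (a < N)%nat /\ (b < N)%nat /\ 1 <= w a b.

Let sqdiff a b := sumUpto (fun k => (u a k - u b k)^2) d.
Let W := sumUpto (fun a => sumUpto (fun b => w a b * sqdiff a b) N) N.

(* After removing loops a chain has at most [N] vertices and uses each edge of weight
   [>= 1] at most once, so it costs at most [N W] by Cauchy-Schwarz. *)
Lemma chain_sqdiff_le p :
  p <> nil -> chain Rl p -> (hd 0%nat p < N)%nat ->
  sqdiff (hd 0%nat p) (last p 0%nat) <= INR N * W.
Proof.
  intros Hp0 Hp Hhd.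
  destruct (chain_remove_loops Rl p Hp0 Hp) as [q [Hqn [Hq [Hqd [Hqh Hql]]]]].
  rewrite <- Hqh, <- Hql.
  assert (Hin : forall a, In a q -> (a < N)%nat).
  { apply (chain_in_range Rl N q Hq); [|congruence].
    intros a b Hab. destruct (Rl_weight a b Hab) as [? [? _]]. auto. }
  assert (Hlen : INR (length q) <= INR N) by (apply le_INR, NoDup_length_le; auto).
  set (P := chain_sum sqdiff q).
  assert (HP : sqdiff (hd 0%nat q) (last q 0%nat) <= INR (length q) * P).
  { unfold P, sqdiff. rewrite (chain_sum_sumUpto (fun k a b => (u a k - u b k)^2)).
    rewrite <- sumUpto_mult_l. apply sumUpto_le. intros k Hk.
    apply (chain_cauchy_schwarz (fun a => u a k) q Hqn). }
  assert (HP0 : 0 <= P) by (apply chain_sum_nonneg; intros; apply sumUpto_sq_nonneg).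
  assert (HPW : P <= W).
  { apply Rle_trans with (chain_sum (fun a b => w a b * sqdiff a b) q).
    - apply (chain_sum_le Rl); auto. intros a b Hab. destruct (Rl_weight a b Hab) as [_ [_ H1]].
      pose proof (sumUpto_sq_nonneg d (fun k => u a k - u b k)). unfold sqdiff. nra.
    - assert (Hterm : forall a b, (a < N)%nat -> (b < N)%nat -> 0 <= w a b * sqdiff a b)
        by (intros; apply Rmult_le_pos; auto; apply sumUpto_sq_nonneg).
      eapply Rle_trans; [apply (chain_sum_le_sum_list _ _ N); auto|].
      apply sum_list_NoDup_le; auto. intros a Ha. apply sumUpto_nonneg. auto. }
  pose proof (pos_INR (length q)). nra.
Qed.

Lemma discrete_poincare :
  (1 <= N)%nat -> connects Rl N ->
  (forall k, (k < d)%nat -> sumUpto (fun i => u i k) N = 0) ->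
  2 * sumUpto (fun i => sumUpto (fun k => (u i k)^2) d) N <= INR N ^ 2 * W.
Proof.
  intros HN Hconn Hmean.
  assert (HNpos : 0 < INR N) by (apply lt_0_INR; lia).
  assert (Hpair : forall i j, (i < N)%nat -> (j < N)%nat -> sqdiff i j <= INR N * W).
  { intros i j Hi Hj. destruct (Hconn i j Hi Hj) as [p [Hn [Hp [<- <-]]]].
    apply chain_sqdiff_le; auto. }
  assert (Hsum : sumUpto (fun i => sumUpto (fun j => sqdiff i j) N) N <= INR N * INR N * (INR N * W)).
  { rewrite Rmult_assoc, <- (sumUpto_const (INR N * W)), <- sumUpto_const.
    apply sumUpto_le. intros i Hi. apply sumUpto_le. auto. }
  unfold sqdiff in Hsum. rewrite dsum_sq_dist_centered in Hsum by auto.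
  apply Rmult_le_reg_l with (INR N); auto. nra.
Qed.

End Poincare.

Section NearDistinctChains.
Variables (N : nat) (D : nat -> nat -> R) (E : nat -> nat -> Prop) (r : R).
Hypothesis D_sym : forall a b, D a b = D b a.
Hypothesis D_triangle : forall a b c, D a c <= D a b + D b c.
Hypothesis D_refl : forall a, D a a = 0.
Hypothesis E_range : forall a b, E a b -> (a < N)%nat /\ (b < N)%nat.
Hypothesis E_short : forall a b, E a b -> D a b <= r.

Definition near_distinct a b := (a < N)%nat /\ (b < N)%nat /\ 0 < D a b /\ D a b <= r.

Lemma D_nonneg a b : 0 <= D a b.
Proof. pose proof (D_triangle a b a). rewrite D_refl, (D_sym b a) in H. lra. Qed.

Lemma D_eq_of_D_zero a b c : D a b = 0 -> D a c = D b c.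
Proof.
  intros H. pose proof (D_triangle a b c). pose proof (D_triangle b a c).
  rewrite (D_sym b a) in *. lra.
Qed.

(* Walking along an [E]-chain towards a point at positive distance, the first step that
   moves at all leaves the starting point's class at distance in (0, r]. *)
Lemma exists_near_distinct p :
  chain E p -> p <> nil -> 0 < D (hd 0%nat p) (last p 0%nat) ->
  exists q, near_distinct (hd 0%nat p) q.
Proof.
  induction p as [|a p IH]; intros Hp Hn HD; [congruence|]. destruct p as [|b p].
  - simpl in HD. rewrite D_refl in HD. lra.
  - destruct Hp as [Hab Hp]. simpl hd in *. simpl last in HD.
    destruct (E_range a b Hab) as [Ha Hb].
    destruct (Rlt_or_le 0 (D a b)) as [Hpos|Hz].
    + exists b. repeat split; auto.
    + assert (Hz' : D a b = 0) by (pose proof (D_nonneg a b); lra).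
      destruct (IH Hp ltac:(congruence)) as [q [Hbq [Hq [H1 H2]]]].
      { simpl hd. rewrite <- (D_eq_of_D_zero a b); auto. }
      exists q. unfold near_distinct. rewrite (D_eq_of_D_zero a b); auto.
Qed.

(* Unless all points coincide, every [E]-edge of length 0 can be bypassed through a point
   at positive distance, so [E]-connectivity gives [near_distinct]-connectivity. *)
Lemma connects_near_distinct a0 b0 :
  connects E N -> (a0 < N)%nat -> (b0 < N)%nat -> 0 < D a0 b0 -> connects near_distinct N.
Proof.
  intros Hconn Ha0 Hb0 Hab.
  assert (Hexit : forall a, (a < N)%nat -> exists q, near_distinct a q).
  { intros a Ha. assert (exists c, (c < N)%nat /\ 0 < D a c) as [c [Hc Hac]].
    { destruct (Rlt_or_le 0 (D a a0)); [exists a0; auto|].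
      exists b0. split; auto. pose proof (D_triangle a0 a b0). rewrite (D_sym a0 a) in H0. lra. }
    destruct (Hconn a c Ha Hc) as [p [Hn [Hp [Hh Hl]]]].
    rewrite <- Hh. apply exists_near_distinct; auto. rewrite Hh, Hl. exact Hac. }
  assert (Hlift : forall p, chain E p -> p <> nil -> (hd 0%nat p < N)%nat ->
      exists p', p' <> nil /\ chain near_distinct p' /\
                 hd 0%nat p' = hd 0%nat p /\ last p' 0%nat = last p 0%nat).
  { induction p as [|a p IH]; intros Hp Hn Hh; [congruence|]. destruct p as [|b p].
    - exists (a :: nil). repeat split; auto; congruence.
    - destruct Hp as [Eab Hp]. destruct (E_range a b Eab) as [Ha Hb].
      destruct (IH Hp ltac:(congruence) Hb) as [p' [Hn' [Hp' [Hh' Hl']]]].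
      destruct p' as [|b' p']; [congruence|]. simpl in Hh'. subst b'.
      destruct (Rlt_or_le 0 (D a b)) as [Hpos|Hz].
      + exists (a :: b :: p'). repeat split; auto; try congruence.
      + destruct (Hexit a Ha) as [q [_ [Hq [H1 H2]]]].
        assert (Hbq : D b q = D a q)
          by (symmetry; apply D_eq_of_D_zero; pose proof (D_nonneg a b); lra).
        exists (a :: q :: b :: p'). repeat split; auto; try congruence; rewrite D_sym; lra. }
  intros i j Hi Hj. destruct (Hconn i j Hi Hj) as [p [Hn [Hp [Hh Hl]]]].
  destruct (Hlift p Hp Hn ltac:(rewrite Hh; auto)) as [p' [? [? [? ?]]]].
  exists p'. repeat split; congruence.
Qed.

End NearDistinctChains.

(** * Calculus on [0, +oo) *)

Lemma cn_iff_limit1_in f t : cont_nonneg f t <-> limit1_in f (fun s => 0 <= s) (f t) t.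
Proof.
  unfold cont_nonneg, limit1_in, limit_in. simpl. unfold R_dist.
  split; intros H eps He; destruct (H eps He) as [del [Hdel H']]; exists del; split; auto.
  intros s [Hs1 Hs2]. auto.
Qed.

Lemma cn_plus f g t : cont_nonneg f t -> cont_nonneg g t -> cont_nonneg (fun s => f s + g s) t.
Proof. rewrite !cn_iff_limit1_in. apply limit_plus. Qed.

Lemma cn_minus f g t : cont_nonneg f t -> cont_nonneg g t -> cont_nonneg (fun s => f s - g s) t.
Proof. rewrite !cn_iff_limit1_in. apply limit_minus. Qed.

Lemma cn_mult f g t : cont_nonneg f t -> cont_nonneg g t -> cont_nonneg (fun s => f s * g s) t.
Proof. rewrite !cn_iff_limit1_in. apply limit_mul. Qed.

Lemma cn_const c t : cont_nonneg (fun _ => c) t.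
Proof. intros eps He. exists 1. split; [lra|]. intros. rewrite Rminus_diag, Rabs_R0. auto. Qed.

Lemma cn_ext f g t : (forall s, f s = g s) -> cont_nonneg f t -> cont_nonneg g t.
Proof.
  intros E H eps He. destruct (H eps He) as [del [Hdel H']]. exists del.
  split; auto. intros. rewrite <- !E. auto.
Qed.

Lemma cn_sum (f : nat -> R -> R) n t :
  (forall m, (m < n)%nat -> cont_nonneg (f m) t) ->
  cont_nonneg (fun s => sumUpto (fun m => f m s) n) t.
Proof.
  induction n as [|n IH]; simpl; intros H; [apply cn_const|].
  apply cn_plus; [apply IH; intros|]; apply H; lia.
Qed.

Lemma cn_of_continuity_pt f t : continuity_pt f t -> cont_nonneg f t.
Proof.
  intros H eps He. destruct (H eps He) as [del [Hdel H']]. exists del. split; auto.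
  intros s Hs Hst. destruct (Req_dec s t) as [->|Hne].
  - rewrite Rminus_diag, Rabs_R0. auto.
  - apply (H' s). repeat split; auto.
Qed.

Lemma cn_pow2 f t : cont_nonneg f t -> cont_nonneg (fun s => (f s)^2) t.
Proof. intros H. apply cn_ext with (fun s => f s * f s); [intros; ring | apply cn_mult; auto]. Qed.

Lemma dpl_ext f g x l :
  (forall s, f s = g s) -> derivable_pt_lim f x l -> derivable_pt_lim g x l.
Proof. intros E H eps He. destruct (H eps He) as [del Hdel]. exists del. intros. rewrite <- !E. auto. Qed.

Lemma dpl_const c x : derivable_pt_lim (fun _ => c) x 0.
Proof. apply dpl_ext with (fct_cte c); [reflexivity | apply derivable_pt_lim_const]. Qed.

Lemma dpl_plus f g x l1 l2 : derivable_pt_lim f x l1 -> derivable_pt_lim g x l2 ->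
  derivable_pt_lim (fun s => f s + g s) x (l1 + l2).
Proof. intros. apply dpl_ext with (f + g)%F; [reflexivity | apply derivable_pt_lim_plus; auto]. Qed.

Lemma dpl_minus f g x l1 l2 : derivable_pt_lim f x l1 -> derivable_pt_lim g x l2 ->
  derivable_pt_lim (fun s => f s - g s) x (l1 - l2).
Proof. intros. apply dpl_ext with (f - g)%F; [reflexivity | apply derivable_pt_lim_minus; auto]. Qed.

Lemma dpl_mult f g x l1 l2 : derivable_pt_lim f x l1 -> derivable_pt_lim g x l2 ->
  derivable_pt_lim (fun s => f s * g s) x (l1 * g x + f x * l2).
Proof. intros. apply dpl_ext with (f * g)%F; [reflexivity | apply derivable_pt_lim_mult; auto]. Qed.

Lemma dpl_scal c f x l :
  derivable_pt_lim f x l -> derivable_pt_lim (fun s => c * f s) x (c * l).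
Proof.
  intros H. replace (c * l) with (0 * f x + c * l) by ring.
  apply (dpl_mult (fun _ => c) f); [apply dpl_const | auto].
Qed.

Lemma dpl_sq f x l : derivable_pt_lim f x l -> derivable_pt_lim (fun s => (f s)^2) x (2 * f x * l).
Proof.
  intros H. apply dpl_ext with (fun s => f s * f s); [intros; ring|].
  replace (2 * f x * l) with (l * f x + f x * l) by ring. apply dpl_mult; auto.
Qed.

Lemma dpl_sum (f : nat -> R -> R) (df : nat -> R) n t :
  (forall m, (m < n)%nat -> derivable_pt_lim (f m) t (df m)) ->
  derivable_pt_lim (fun s => sumUpto (fun m => f m s) n) t (sumUpto df n).
Proof.
  induction n as [|n IH]; simpl; intros H; [apply dpl_const|].
  apply dpl_plus; [apply IH; intros|]; apply H; lia.
Qed.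

Lemma dpl_lin a x : derivable_pt_lim (fun s => a * s) x a.
Proof.
  pose proof (dpl_scal a id x 1 (derivable_pt_lim_id x)) as H.
  rewrite Rmult_1_r in H. exact H.
Qed.

Lemma dpl_exp_lin a x : derivable_pt_lim (fun s => exp (a * s)) x (a * exp (a * x)).
Proof.
  apply dpl_ext with (comp exp (fun s => a * s)); [reflexivity|].
  rewrite Rmult_comm. apply derivable_pt_lim_comp; [apply dpl_lin | apply derivable_pt_lim_exp].
Qed.

Lemma cn_exp_lin a t : cont_nonneg (fun s => exp (a * s)) t.
Proof.
  apply cn_of_continuity_pt, derivable_continuous_pt.
  exists (a * exp (a * t)). apply dpl_exp_lin.
Qed.

Lemma cn_lin a t : cont_nonneg (fun s => a * s) t.
Proof.
  apply cn_of_continuity_pt, derivable_continuous_pt. exists a. apply dpl_lin.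
Qed.

(* Only continuity from the right at [a] is available, hence the detour through a point
   [a'] close to [a] before applying the mean value theorem. *)
Lemma nonincreasing_of_deriv_nonpos f df a b :
  0 <= a -> a < b -> cont_nonneg f a ->
  (forall c, a < c <= b -> derivable_pt_lim f c (df c)) ->
  (forall c, a < c < b -> df c <= 0) -> f b <= f a.
Proof.
  intros Ha Hab Hc Hd Hneg. destruct (Rle_or_lt (f b) (f a)) as [|Hgt]; auto. exfalso.
  destruct (Hc (f b - f a) ltac:(lra)) as [del [Hdel H]].
  set (a' := a + Rmin del (b - a) / 2).
  pose proof (Rmin_l del (b - a)). pose proof (Rmin_r del (b - a)).
  pose proof (Rmin_glb_lt del (b - a) 0 Hdel ltac:(lra)).
  destruct (MVT_cor2 f df a' b ltac:(unfold a'; lra) ltac:(intros; apply Hd; unfold a' in *; lra))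
    as [c [Hc1 Hc2]].
  specialize (Hneg c ltac:(unfold a' in *; lra)).
  specialize (H a' ltac:(unfold a'; lra) ltac:(rewrite Rabs_right; unfold a'; lra)).
  apply Rabs_def2 in H. unfold a' in *. nra.
Qed.

Lemma increment_bounds_of_deriv_bounds f df a b m M :
  0 <= a -> a < b -> cont_nonneg f a ->
  (forall c, a < c <= b -> derivable_pt_lim f c (df c)) ->
  (forall c, a < c < b -> m <= df c <= M) ->
  m * (b - a) <= f b - f a <= M * (b - a).
Proof.
  intros Ha Hab Hc Hd Hb. split.
  - assert (m * b - f b <= m * a - f a); [|lra].
    apply (nonincreasing_of_deriv_nonpos (fun t => m * t - f t) (fun c => m - df c)); auto.
    + apply cn_minus; [apply cn_lin | auto].
    + intros. apply dpl_minus; [apply dpl_lin | auto].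
    + intros c Hc'. specialize (Hb c Hc'). lra.
  - assert (f b - M * b <= f a - M * a); [|lra].
    apply (nonincreasing_of_deriv_nonpos (fun t => f t - M * t) (fun c => df c - M)); auto.
    + apply cn_minus; [auto | apply cn_lin].
    + intros. apply dpl_minus; [auto | apply dpl_lin].
    + intros c Hc'. specialize (Hb c Hc'). lra.
Qed.

Lemma real_induction_nonneg (P : R -> Prop) :
  (forall T, 0 <= T -> (forall s, 0 <= s < T -> P s) -> P T) ->
  (forall T, 0 <= T -> (forall s, 0 <= s <= T -> P s) ->
     exists del, 0 < del /\ forall s, T <= s <= T + del -> P s) ->
  forall t, 0 <= t -> P t.
Proof.
  intros Hleft Hright t0 Ht0. apply NNPP. intros Hnot.
  set (E := fun T => 0 <= T <= t0 /\ forall s, 0 <= s < T -> P s).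
  assert (Hb : bound E) by (exists t0; intros y [Hy _]; lra).
  assert (He : exists y, E y) by (exists 0; split; [lra | intros; lra]).
  destruct (completeness E Hb He) as [m [Hub Hlub]].
  assert (Hm0 : 0 <= m) by (apply Hub; split; [lra | intros; lra]).
  assert (Hmt : m <= t0) by (apply Hlub; intros y [Hy _]; lra).
  assert (Hbelow : forall s, 0 <= s < m -> P s).
  { intros s Hs. apply NNPP. intros Hns.
    assert (m <= s); [|lra]. apply Hlub. intros y [Hy Hy'].
    destruct (Rle_or_lt y s); auto. exfalso. apply Hns, Hy'. lra. }
  assert (Pm : P m) by (apply Hleft; auto).
  destruct (Req_dec m t0) as [<-|Hne]; [contradiction|].
  destruct (Hright m Hm0) as [del [Hdel H]].
  { intros s Hs. destruct (Req_dec s m) as [->|]; auto. apply Hbelow; lra. }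
  assert (Hin : E (Rmin (m + del) t0)).
  { split; [split; [apply Rmin_glb; lra | apply Rmin_r]|].
    intros s Hs. destruct (Rlt_or_le s m); [apply Hbelow; lra|].
    apply H. pose proof (Rmin_l (m + del) t0). lra. }
  apply Hub in Hin. unfold Rmin in Hin. destruct (Rle_dec (m + del) t0); lra.
Qed.

Lemma cn_right_near f T eta :
  0 <= T -> 0 < eta -> cont_nonneg f T ->
  exists del, 0 < del /\ forall s, T <= s <= T + del -> Rabs (f s - f T) <= eta.
Proof.
  intros HT He Hc. destruct (Hc eta He) as [del [Hdel H]]. exists (del / 2). split; [lra|].
  intros s Hs. apply Rlt_le, H; [lra|]. rewrite Rabs_right; lra.
Qed.

Lemma right_near_forall (n : nat) (Q : nat -> R -> Prop) T :
  (forall m, (m < n)%nat -> exists del, 0 < del /\ forall s, T <= s <= T + del -> Q m s) ->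
  exists del, 0 < del /\ forall s, T <= s <= T + del -> forall m, (m < n)%nat -> Q m s.
Proof.
  induction n as [|n IH]; intros H.
  - exists 1. split; [lra|]. intros; lia.
  - destruct IH as [d1 [Hd1 H1]]; [intros; apply H; lia|].
    destruct (H n ltac:(lia)) as [d2 [Hd2 H2]].
    exists (Rmin d1 d2). split; [apply Rmin_glb_lt; auto|].
    intros s Hs m Hm. pose proof (Rmin_l d1 d2). pose proof (Rmin_r d1 d2).
    destruct (Nat.eq_dec m n) as [->|]; [apply H2 | apply H1]; lra || lia.
Qed.

(* [H s = <e, y s - y 0> + K e^{-mu s}] with [e = y T - y 0] and [K = |e| B / mu] is
   nonincreasing, and [H T <= H 0] gives [|e|^2 <= |e| B / mu]. *)
Lemma vnorm_increment_le_of_exp_speed d (y w : nat -> R -> R) T B mu :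
  0 <= T -> 0 <= B -> 0 < mu ->
  (forall k, (k < d)%nat -> cont_nonneg (y k) 0) ->
  (forall k c, (k < d)%nat -> 0 < c <= T -> derivable_pt_lim (y k) c (w k c)) ->
  (forall c, 0 < c < T -> vnorm d (fun k => w k c) <= B * exp (- mu * c)) ->
  vnorm d (fun k => y k T - y k 0) <= B / mu.
Proof.
  intros HT HB Hmu Hcont Hder Hspeed.
  set (e := fun k => y k T - y k 0). set (E := vnorm d e).
  assert (HE : 0 <= E) by apply vnorm_nonneg.
  assert (Hbound : 0 <= B / mu) by (apply Rle_mult_inv_pos; lra).
  destruct (Req_dec T 0) as [->|HT0].
  { unfold E, e. rewrite (vnorm_ext _ _ (fun _ => 0)) by (intros; ring).
    unfold vnorm. rewrite (sumUpto_ext _ (fun _ => 0)) by (intros; ring).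
    rewrite sumUpto_zero, sqrt_0. exact Hbound. }
  set (K := E * B / mu).
  set (H := fun s => sumUpto (fun k => e k * (y k s - y k 0)) d + K * exp (- mu * s)).
  assert (Hmono : H T <= H 0).
  { apply (nonincreasing_of_deriv_nonpos H
      (fun c => sumUpto (fun k => e k * (w k c - 0)) d + K * (- mu * exp (- mu * c)))); try lra.
    - apply cn_plus; [|apply cn_mult; [apply cn_const | apply cn_exp_lin]].
      apply cn_sum. intros k Hk. apply cn_mult; [apply cn_const|].
      apply cn_minus; [auto | apply cn_const].
    - intros c Hc. apply dpl_plus; [|apply dpl_scal, dpl_exp_lin].
      apply (dpl_sum (fun k s => e k * (y k s - y k 0))). intros k Hk.
      apply dpl_scal, dpl_minus; [auto | apply dpl_const].
    - intros c Hc.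
      rewrite (sumUpto_ext _ (fun k => e k * w k c)) by (intros; ring).
      pose proof (cauchy_schwarz d e (fun k => w k c)). fold E in H0.
      pose proof (Hspeed c Hc). pose proof (exp_pos (- mu * c)).
      assert (E * vnorm d (fun k => w k c) <= E * (B * exp (- mu * c)))
        by (apply Rmult_le_compat_l; auto).
      unfold K. replace (E * B / mu * (- mu * exp (- mu * c))) with (- (E * (B * exp (- mu * c))))
        by (field; lra). lra. }
  unfold H in Hmono. rewrite Rmult_0_r, exp_0, Rmult_1_r in Hmono.
  rewrite (sumUpto_ext (fun k => e k * (y k 0 - y k 0)) (fun _ => 0)), sumUpto_zero in Hmono
    by (intros; ring).
  rewrite (sumUpto_ext _ (fun k => e k ^ 2)), <- vnorm_sq in Hmono by (intros; unfold e; ring).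
  fold E in Hmono. pose proof (exp_pos (- mu * T)).
  assert (HK : 0 <= K) by (unfold K; apply Rle_mult_inv_pos; [apply Rmult_le_pos|]; lra).
  assert (Hsq : E * E <= E * (B / mu)) by (unfold K in *; replace (E * (B / mu)) with (E * B / mu) by (field; lra); nra).
  destruct (Req_dec E 0) as [->|HE0]; [lra|]. apply Rmult_le_reg_l with E; lra.
Qed.

(** * The Cucker-Smale dynamics *)

Section CuckerSmale.
Variables (torus : bool) (d N : nat) (phi : R -> R) (kappa r : R) (x v : nat -> R -> vec).
Hypothesis N_pos : (1 <= N)%nat.
Hypothesis phi_nonneg : forall h, 0 <= h -> 0 <= phi h.
Hypothesis kappa_pos : 0 < kappa.
Hypothesis r_pos : 0 < r.
Hypothesis phi_ge1 : forall h, 0 < h <= 2 * r -> 1 <= phi h.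
Hypothesis sol : CS_solution torus d N phi kappa x v.

Definition pair_dist s a b := dist_Omega torus d (x a s) (x b s).
Definition fluct a s k := v a s k - vbar0 N v k.
Definition energy s := sumUpto (fun i => sumUpto (fun k => (fluct i s k)^2) d) N.
Definition dissipation s :=
  sumUpto (fun a => sumUpto (fun b =>
    phi (pair_dist s a b) * sumUpto (fun k => (fluct a s k - fluct b s k)^2) d) N) N.
Definition rate := 2 * kappa / INR N ^ 3.
Definition weighted_energy s := energy s * exp (rate * s).
Definition initial_edge a b := (a < N)%nat /\ (b < N)%nat /\ pair_dist 0 a b <= r.

Lemma INR_N_pos : 0 < INR N.
Proof. apply lt_0_INR. lia. Qed.

Lemma rate_pos : 0 < rate.
Proof. unfold rate. pose proof INR_N_pos. apply Rdiv_lt_0_compat; [lra | apply pow_lt; auto]. Qed.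

Lemma pair_dist_sym s a b : pair_dist s a b = pair_dist s b a.
Proof. apply dist_Omega_sym. Qed.

Lemma energy_nonneg s : 0 <= energy s.
Proof. apply sumUpto_nonneg; intros. apply sumUpto_sq_nonneg. Qed.

Lemma dissipation_nonneg s : 0 <= dissipation s.
Proof.
  apply sumUpto_nonneg; intros. apply sumUpto_nonneg; intros.
  apply Rmult_le_pos; [apply phi_nonneg, dist_Omega_nonneg | apply sumUpto_sq_nonneg].
Qed.

Lemma x_deriv i k t : (i < N)%nat -> (k < d)%nat -> 0 < t ->
  derivable_pt_lim (fun s => x i s k) t (v i t k).
Proof. intros Hi Hk Ht. apply (sol i k Hi Hk), Ht. Qed.

Lemma v_deriv i k t : (i < N)%nat -> (k < d)%nat -> 0 < t ->
  derivable_pt_lim (fun s => v i s k) t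
    (kappa / INR N * sumUpto (fun j => phi (pair_dist t i j) * (v j t k - v i t k)) N).
Proof. intros Hi Hk Ht. apply (sol i k Hi Hk), Ht. Qed.

Lemma x_cont i k t : (i < N)%nat -> (k < d)%nat -> 0 <= t -> cont_nonneg (fun s => x i s k) t.
Proof. intros Hi Hk Ht. apply (sol i k Hi Hk), Ht. Qed.

Lemma v_cont i k t : (i < N)%nat -> (k < d)%nat -> 0 <= t -> cont_nonneg (fun s => v i s k) t.
Proof. intros Hi Hk Ht. apply (sol i k Hi Hk), Ht. Qed.

Lemma energy_cont t : 0 <= t -> cont_nonneg energy t.
Proof.
  intros Ht. apply cn_sum; intros i Hi. apply cn_sum; intros k Hk. apply cn_pow2.
  apply cn_minus; [apply v_cont; auto | apply cn_const].
Qed.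

Lemma weighted_energy_cont t : 0 <= t -> cont_nonneg weighted_energy t.
Proof. intros. apply cn_mult; [apply energy_cont; auto | apply cn_exp_lin]. Qed.

(* Conservation of momentum: the total velocity has derivative 0 by symmetry of the
   interaction. *)
Lemma fluct_mean_zero s k : 0 <= s -> (k < d)%nat -> sumUpto (fun i => fluct i s k) N = 0.
Proof.
  intros Hs Hk. set (S := fun t => sumUpto (fun i => v i t k) N).
  assert (HS : S s = S 0).
  { destruct (Req_dec s 0) as [->|Hs0]; auto.
    assert (Hinc : 0 * (s - 0) <= S s - S 0 <= 0 * (s - 0)); [|lra].
    apply (increment_bounds_of_deriv_bounds S (fun _ => 0)); try lra.
    - apply cn_sum; intros. apply v_cont; auto; lra.
    - intros c Hc. unfold S.
      replace 0 with (sumUpto (fun i => kappa / INR N *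
        sumUpto (fun j => phi (pair_dist c i j) * (v j c k - v i c k)) N) N).
      + apply dpl_sum. intros i Hi. apply v_deriv; auto; lra.
      + rewrite sumUpto_mult_l, dsum_antisym_zero; [ring|].
        intros. rewrite pair_dist_sym. reflexivity.
    - intros. lra. }
  unfold fluct. rewrite sumUpto_sub, sumUpto_const. fold (S s). rewrite HS.
  unfold vbar0. fold (S 0). field. apply Rgt_not_eq, INR_N_pos.
Qed.

Lemma energy_deriv s : 0 < s -> derivable_pt_lim energy s (- (kappa / INR N) * dissipation s).
Proof.
  intros Hs. set (c := kappa / INR N).
  set (q := fun i j => phi (pair_dist s i j) * sumUpto (fun k => fluct i s k * (fluct j s k - fluct i s k)) d).
  apply dpl_ext with energy; [reflexivity|].
  replace (- c * dissipation s) with (2 * c * sumUpto (fun i => sumUpto (fun j => q i j) N) N).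
  - replace (2 * c * sumUpto (fun i => sumUpto (fun j => q i j) N) N)
      with (sumUpto (fun i => sumUpto (fun k => 2 * fluct i s k *
              (c * sumUpto (fun j => phi (pair_dist s i j) * (v j s k - v i s k)) N - 0)) d) N).
    + apply dpl_sum; intros i Hi. apply dpl_sum; intros k Hk.
      apply (dpl_sq (fun t => v i t k - vbar0 N v k)).
      apply dpl_minus; [apply v_deriv; auto | apply dpl_const].
    + rewrite <- sumUpto_mult_l. apply sumUpto_ext; intros i Hi.
      transitivity (2 * c * sumUpto (fun k => sumUpto (fun j =>
        fluct i s k * (phi (pair_dist s i j) * (fluct j s k - fluct i s k))) N) d).
      * rewrite <- sumUpto_mult_l. apply sumUpto_ext; intros k Hk.
        rewrite Rminus_0_r, <- !sumUpto_mult_l. apply sumUpto_ext; intros j Hj.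
        unfold fluct. ring.
      * rewrite sumUpto_swap. f_equal. apply sumUpto_ext; intros j Hj.
        unfold q. rewrite <- sumUpto_mult_l. apply sumUpto_ext; intros. ring.
  - rewrite dsum_symmetrize.
    rewrite (sumUpto_ext (fun i => sumUpto (fun j => q i j + q j i) N)
      (fun i => -1 * sumUpto (fun j => phi (pair_dist s i j) *
                   sumUpto (fun k => (fluct i s k - fluct j s k) ^ 2) d) N)).
    + rewrite sumUpto_mult_l. unfold dissipation, c. field. apply Rgt_not_eq, INR_N_pos.
    + intros i Hi. rewrite <- sumUpto_mult_l. apply sumUpto_ext; intros j Hj.
      unfold q. rewrite (pair_dist_sym s j i), <- Rmult_plus_distr_l, <- sumUpto_add.
      rewrite (sumUpto_ext _ (fun k => -1 * (fluct i s k - fluct j s k)^2)) by (intros; ring).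
      rewrite sumUpto_mult_l. ring.
Qed.

Lemma energy_nonincreasing T s : 0 <= T -> T <= s -> energy s <= energy T.
Proof.
  intros HT Hs. destruct (Req_dec s T) as [->|Hne]; [lra|].
  apply (nonincreasing_of_deriv_nonpos energy (fun c => - (kappa / INR N) * dissipation c));
    try lra.
  - apply energy_cont; auto.
  - intros. apply energy_deriv. lra.
  - intros c Hc. pose proof (dissipation_nonneg c). pose proof INR_N_pos.
    assert (0 <= kappa / INR N) by (apply Rlt_le, Rdiv_lt_0_compat; auto). nra.
Qed.

Lemma weighted_energy_deriv s : 0 < s ->
  derivable_pt_lim weighted_energy s
    ((- (kappa / INR N) * dissipation s + rate * energy s) * exp (rate * s)).
Proof.
  intros Hs. replace ((- (kappa / INR N) * dissipation s + rate * energy s) * exp (rate * s))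
    with ((- (kappa / INR N) * dissipation s) * exp (rate * s) + energy s * (rate * exp (rate * s)))
    by ring.
  apply (dpl_mult energy (fun t => exp (rate * t))); [apply energy_deriv; auto | apply dpl_exp_lin].
Qed.

Lemma initial_edges_connect :
  chain_connected torus d N (fun i => x i 0) r -> connects initial_edge N.
Proof.
  intros Hch i j Hi Hj. destruct (Hch i j Hi Hj) as [cs [Hn [Hf [H1 [H2 H3]]]]].
  rewrite Forall_forall in Hf.
  assert (Hcs : chain initial_edge cs).
  { apply chain_of_nth. intros m Hm. destruct (H3 m Hm) as [z [Hz1 Hz2]].
    split; [apply Hf, nth_In; lia|]. split; [apply Hf, nth_In; lia|].
    unfold pair_dist. eapply Rle_trans; [apply (dist_Omega_triangle _ _ _ z)|].
    rewrite dist_Omega_sym. lra. }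
  destruct cs as [|c cs]; [congruence|].
  exists (i :: (c :: cs) ++ j :: nil). repeat split; try congruence.
  - apply Hf. simpl. auto.
  - unfold pair_dist. simpl in H1. lra.
  - apply chain_snoc; auto; try congruence. repeat split; auto.
    + apply Hf, In_last. congruence.
    + unfold pair_dist. rewrite dist_Omega_sym. lra.
  - rewrite app_comm_cons. apply last_last.
Qed.

Lemma energy_poincare s :
  0 <= s -> connects (near_distinct N (pair_dist s) (2 * r)) N ->
  2 * energy s <= INR N ^ 2 * dissipation s.
Proof.
  intros Hs Hconn.
  apply (discrete_poincare N d (fun i k => fluct i s k) (fun a b => phi (pair_dist s a b))
           (near_distinct N (pair_dist s) (2 * r))); auto.
  - intros. apply phi_nonneg, dist_Omega_nonneg.
  - intros a b [Ha [Hb Hab]]. repeat split; auto.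
  - intros k Hk. apply fluct_mean_zero; auto.
Qed.

(* Initial edges that have stretched by less than [r] keep the flock connected through
   pairs at distance in (0, 2r], where [phi >= 1]. *)
Lemma weighted_energy_deriv_nonpos s :
  0 < s -> connects initial_edge N ->
  (forall a b, initial_edge a b -> pair_dist s a b <= 2 * r) ->
  (exists a0 b0, (a0 < N)%nat /\ (b0 < N)%nat /\ 0 < pair_dist s a0 b0) ->
  (- (kappa / INR N) * dissipation s + rate * energy s) * exp (rate * s) <= 0.
Proof.
  intros Hs Hconn Hshort [a0 [b0 [Ha0 [Hb0 Hab]]]].
  assert (HP : 2 * energy s <= INR N ^ 2 * dissipation s).
  { apply energy_poincare; [lra|].
    apply (connects_near_distinct N (pair_dist s) initial_edge (2 * r)) with a0 b0; auto.
    - intros; apply pair_dist_sym.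
    - intros; apply dist_Omega_triangle.
    - intros; apply dist_Omega_refl.
    - intros a b [? [? _]]; auto. }
  assert (rate * energy s <= kappa / INR N * dissipation s).
  { pose proof INR_N_pos. unfold rate.
    replace (2 * kappa / INR N ^ 3 * energy s) with (kappa / INR N ^ 3 * (2 * energy s))
      by (field; lra).
    replace (kappa / INR N * dissipation s) with (kappa / INR N ^ 3 * (INR N ^ 2 * dissipation s))
      by (field; lra).
    apply Rmult_le_compat_l; auto. apply Rlt_le, Rdiv_lt_0_compat; auto. apply pow_lt; auto. }
  pose proof (exp_pos (rate * s)). nra.
Qed.

Lemma exp_half a : exp (a / 2) ^ 2 = exp a.
Proof. simpl. rewrite Rmult_1_r, <- exp_plus. f_equal. field. Qed.

Lemma energy_decay_of_weighted c : weighted_energy c <= energy 0 -> energy c <= energy 0 * exp (- rate * c).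
Proof.
  intros H. unfold weighted_energy in H.
  replace (energy c) with (energy c * exp (rate * c) * exp (- rate * c)).
  - apply Rmult_le_compat_r; auto. apply Rlt_le, exp_pos.
  - rewrite Rmult_assoc, <- exp_plus. replace (rate * c + - rate * c) with 0 by ring.
    rewrite exp_0. ring.
Qed.

Lemma velocity_diff_sq_le_energy c a b : (a < N)%nat -> (b < N)%nat ->
  sumUpto (fun k => (v a c k - v b c k)^2) d <= 4 * energy c.
Proof.
  intros Ha Hb.
  apply Rle_trans with (sumUpto (fun k => 2 * (fluct a c k)^2 + 2 * (fluct b c k)^2) d).
  { apply sumUpto_le; intros k Hk. unfold fluct.
    pose proof (pow2_ge_0 (v a c k + v b c k - 2 * vbar0 N v k)). nra. }
  rewrite sumUpto_add, !sumUpto_mult_l.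
  pose proof (sumUpto_term_le (fun i => sumUpto (fun k => (fluct i c k)^2) d) N a
                ltac:(intros; apply sumUpto_sq_nonneg) Ha).
  pose proof (sumUpto_term_le (fun i => sumUpto (fun k => (fluct i c k)^2) d) N b
                ltac:(intros; apply sumUpto_sq_nonneg) Hb).
  unfold energy. simpl in *. lra.
Qed.

Lemma relative_drift_le T a b :
  0 <= T -> (forall s, 0 <= s <= T -> weighted_energy s <= energy 0) ->
  (a < N)%nat -> (b < N)%nat ->
  vnorm d (fun k => (x a T k - x b T k) - (x a 0 k - x b 0 k)) <= 4 * sqrt (energy 0) / rate.
Proof.
  intros HT HW Ha Hb. pose proof rate_pos. pose proof (energy_nonneg 0).
  replace (4 * sqrt (energy 0) / rate) with (2 * sqrt (energy 0) / (rate / 2)) by (field; lra).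
  apply (vnorm_increment_le_of_exp_speed d (fun k s => x a s k - x b s k)
           (fun k c => v a c k - v b c k)); auto.
  - pose proof (sqrt_pos (energy 0)). lra.
  - lra.
  - intros k Hk. apply cn_minus; apply x_cont; auto; lra.
  - intros k c Hk Hc. apply dpl_minus; apply x_deriv; auto; lra.
  - intros c Hc. pose proof (sqrt_pos (energy 0)). pose proof (exp_pos (- (rate / 2) * c)).
    apply sq_le_sq_inv; [apply vnorm_nonneg | apply Rmult_le_pos; lra|].
    rewrite vnorm_sq, Rpow_mult_distr, Rpow_mult_distr, pow2_sqrt by auto.
    replace (- (rate / 2) * c) with ((- rate * c) / 2) by field. rewrite exp_half.
    apply Rle_trans with (4 * energy c); [apply velocity_diff_sq_le_energy; auto|].
    pose proof (energy_decay_of_weighted c ltac:(apply HW; lra)). simpl. lra.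
Qed.

Lemma relative_positions_right_near T eta : 0 <= T -> 0 < eta ->
  exists del, 0 < del /\ forall s, T <= s <= T + del -> forall a b, (a < N)%nat -> (b < N)%nat ->
    vnorm d (fun k => (x a s k - x b s k) - (x a T k - x b T k)) <= eta.
Proof.
  intros HT He. pose proof (sqrt_pos (INR d)) as Hsd.
  set (eta' := eta / (2 * (sqrt (INR d) + 1))).
  assert (He' : 0 < eta') by (unfold eta'; apply Rdiv_lt_0_compat; lra).
  destruct (right_near_forall N (fun a s => forall k, (k < d)%nat -> Rabs (x a s k - x a T k) <= eta') T)
    as [del [Hdel H]].
  { intros a Ha. apply right_near_forall. intros k Hk. apply cn_right_near; auto. apply x_cont; auto. }
  exists del. split; auto. intros s Hs a b Ha Hb.
  eapply Rle_trans; [apply (vnorm_le_sqrt_dim d _ (2 * eta')); [lra|]|].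
  - intros k Hk. pose proof (H s Hs a Ha k Hk). pose proof (H s Hs b Hb k Hk).
    replace (x a s k - x b s k - (x a T k - x b T k))
      with ((x a s k - x a T k) - (x b s k - x b T k)) by ring.
    eapply Rle_trans; [apply Rabs_triang|]. rewrite Rabs_Ropp. lra.
  - unfold eta'. replace (sqrt (INR d) * (2 * (eta / (2 * (sqrt (INR d) + 1)))))
      with (eta * (sqrt (INR d) / (sqrt (INR d) + 1))) by (field; lra).
    rewrite <- (Rmult_1_r eta) at 2. apply Rmult_le_compat_l; [lra|].
    apply Rmult_le_reg_r with (sqrt (INR d) + 1); [lra|].
    unfold Rdiv. rewrite Rmult_assoc, Rinv_l; lra.
Qed.

Lemma pair_dist_pos_persists T a b : 0 <= T -> (a < N)%nat -> (b < N)%nat -> 0 < pair_dist T a b ->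
  exists del, 0 < del /\ forall s, T <= s <= T + del -> 0 < pair_dist s a b.
Proof.
  intros HT Ha Hb Hp.
  destruct (relative_positions_right_near T (pair_dist T a b / 2) HT ltac:(lra)) as [del [Hdel H]].
  exists del. split; auto. intros s Hs. specialize (H s Hs a b Ha Hb).
  pose proof (dist_Omega_perturb torus d (x a s) (x b s) (x a T) (x b T)) as Hpert.
  rewrite <- vnorm_opp in Hpert.
  rewrite (vnorm_ext d _ (fun k => x a s k - x b s k - (x a T k - x b T k))) in Hpert
    by (intros; ring).
  unfold pair_dist in *. lra.
Qed.

(* Two coinciding agents with different velocities separate immediately: along a
   coordinate where the velocities differ, the relative position moves by an amount in
   (0, 1), which is not an integer. *)
Lemma pair_dist_pos_after_split_oriented T a b k :
  0 <= T -> (a < N)%nat -> (b < N)%nat -> (k < d)%nat ->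
  pair_dist T a b = 0 -> 0 < v a T k - v b T k ->
  exists del, 0 < del /\ forall s, T < s <= T + del -> 0 < pair_dist s a b.
Proof.
  intros HT Ha Hb Hk H0 Hw. set (w := v a T k - v b T k) in *.
  destruct (cn_right_near (fun t => v a t k - v b t k) T (w / 2) HT ltac:(lra)) as [d0 [Hd0 Hc]].
  { apply cn_minus; apply v_cont; auto. }
  exists (Rmin d0 (1 / (2 * w))). split.
  { apply Rmin_glb_lt; auto. apply Rdiv_lt_0_compat; lra. }
  intros s Hs. pose proof (Rmin_l d0 (1 / (2 * w))). pose proof (Rmin_r d0 (1 / (2 * w))).
  set (y := fun t => x a t k - x b t k).
  assert (Hinc : w / 2 * (s - T) <= y s - y T <= 3 * w / 2 * (s - T)).
  { apply (increment_bounds_of_deriv_bounds y (fun c => v a c k - v b c k)); try lra.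
    - apply cn_minus; apply x_cont; auto.
    - intros c Hc'. apply dpl_minus; apply x_deriv; auto; lra.
    - intros c Hc'. specialize (Hc c ltac:(lra)). cbv beta in Hc. fold w in Hc.
      pose proof (Rle_abs (v a c k - v b c k - w)) as Hle.
      pose proof (Rle_abs (- (v a c k - v b c k - w))) as Hge.
      rewrite Rabs_Ropp in Hge. lra. }
  assert (Hsmall : 0 < Rabs (y s - y T) < 1).
  { assert (3 * w / 2 * (s - T) <= 3 * w / 2 * (1 / (2 * w)))
      by (apply Rmult_le_compat_l; lra).
    replace (3 * w / 2 * (1 / (2 * w))) with (3 / 4) in H2 by (field; lra).
    rewrite Rabs_right; nra. }
  pose proof (coord_dist_pos_shift torus (y T) (y s - y T)
                (dist_Omega_zero_coord torus d (x a T) (x b T) k H0 Hk) Hsmall) as Hpos.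
  replace (y T + (y s - y T)) with (y s) in Hpos by ring.
  apply (dist_Omega_pos_of_coord torus d _ _ k Hk). exact Hpos.
Qed.

Lemma pair_dist_pos_after_split T a b k :
  0 <= T -> (a < N)%nat -> (b < N)%nat -> (k < d)%nat ->
  pair_dist T a b = 0 -> v a T k <> v b T k ->
  exists del, 0 < del /\ forall s, T < s <= T + del -> 0 < pair_dist s a b.
Proof.
  intros HT Ha Hb Hk H0 Hne. destruct (Rlt_or_le 0 (v a T k - v b T k)).
  - apply (pair_dist_pos_after_split_oriented T a b k); auto.
  - destruct (pair_dist_pos_after_split_oriented T b a k) as [del [Hdel Hd]]; auto.
    + rewrite pair_dist_sym. auto.
    + assert (v a T k - v b T k <> 0) by lra. lra.
    + exists del. split; auto. intros. rewrite pair_dist_sym. auto.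
Qed.

Lemma energy_vanishes_of_consensus T :
  0 <= T -> (forall a b k, (a < N)%nat -> (b < N)%nat -> (k < d)%nat -> v a T k = v b T k) ->
  forall s, T <= s -> energy s = 0.
Proof.
  intros HT Heq s Hs.
  assert (HT0 : energy T = 0).
  { pose proof (dsum_sq_dist_centered N d (fun i k => fluct i T k)
                  ltac:(intros; apply fluct_mean_zero; auto)) as E.
    rewrite (sumUpto_ext _ (fun _ => 0)), sumUpto_zero in E.
    - fold (energy T) in E. pose proof INR_N_pos. nra.
    - intros i Hi. rewrite (sumUpto_ext _ (fun _ => 0)); [apply sumUpto_zero|].
      intros j Hj. rewrite (sumUpto_ext _ (fun _ => 0)); [apply sumUpto_zero|].
      intros k Hk. unfold fluct. rewrite (Heq i j k); auto. ring. }
  pose proof (energy_nonincreasing T s HT Hs). pose proof (energy_nonneg s). lra.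
Qed.

Lemma separation_or_consensus T : 0 <= T ->
  (exists del, 0 < del /\ forall s, T < s <= T + del ->
     exists a0 b0, (a0 < N)%nat /\ (b0 < N)%nat /\ 0 < pair_dist s a0 b0) \/
  (forall a b k, (a < N)%nat -> (b < N)%nat -> (k < d)%nat -> v a T k = v b T k).
Proof.
  intros HT.
  destruct (classic (exists a0 b0, (a0 < N)%nat /\ (b0 < N)%nat /\ 0 < pair_dist T a0 b0))
    as [[a0 [b0 [Ha [Hb Hp]]]]|Hcoinc].
  { left. destruct (pair_dist_pos_persists T a0 b0 HT Ha Hb Hp) as [del [Hdel H]].
    exists del. split; auto. intros s Hs. exists a0, b0. repeat split; auto. apply H. lra. }
  destruct (classic (exists a b k, (a < N)%nat /\ (b < N)%nat /\ (k < d)%nat /\ v a T k <> v b T k))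
    as [[a [b [k [Ha [Hb [Hk Hne]]]]]]|Hcons].
  - left. assert (H0 : pair_dist T a b = 0).
    { destruct (Rle_lt_or_eq_dec 0 (pair_dist T a b) (dist_Omega_nonneg _ _ _ _)); auto.
      exfalso. apply Hcoinc. eauto. }
    destruct (pair_dist_pos_after_split T a b k HT Ha Hb Hk H0 Hne) as [del [Hdel H2]].
    exists del. split; auto. intros s Hs. exists a, b. auto.
  - right. intros a b k Ha Hb Hk. apply NNPP. intro. apply Hcons. exists a, b, k. auto.
Qed.

Lemma weighted_energy_left_closed T :
  0 <= T -> (forall s, 0 <= s < T -> weighted_energy s <= energy 0) -> weighted_energy T <= energy 0.
Proof.
  intros HT Hbelow. destruct (Req_dec T 0) as [->|HT0].
  { unfold weighted_energy. rewrite Rmult_0_r, exp_0. lra. }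
  destruct (Rle_or_lt (weighted_energy T) (energy 0)) as [|Hgt]; auto. exfalso.
  destruct (weighted_energy_cont T HT (weighted_energy T - energy 0) ltac:(lra)) as [del [Hdel H]].
  set (s := Rmax 0 (T - del / 2)).
  assert (Hs : 0 <= s < T) by (unfold s, Rmax; destruct (Rle_dec 0 (T - del / 2)); lra).
  assert (Hsd : Rabs (s - T) < del)
    by (unfold s, Rmax; destruct (Rle_dec 0 (T - del / 2)); rewrite Rabs_left; lra).
  specialize (H s ltac:(lra) Hsd). specialize (Hbelow s Hs). apply Rabs_def2 in H. lra.
Qed.

Lemma initial_edges_stay_short T : 0 <= T ->
  (forall a b, (a < N)%nat -> (b < N)%nat ->
     vnorm d (fun k => (x a T k - x b T k) - (x a 0 k - x b 0 k)) <= r / 8) ->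
  exists del, 0 < del /\ forall s, T <= s <= T + del ->
    forall a b, initial_edge a b -> pair_dist s a b <= 2 * r.
Proof.
  intros HT Hdrift.
  destruct (relative_positions_right_near T (r / 8) HT ltac:(lra)) as [del [Hdel Hnear]].
  exists del. split; auto. intros s Hs a b [Ha [Hb H0]]. unfold pair_dist in *.
  eapply Rle_trans; [apply (dist_Omega_perturb torus d (x a 0) (x b 0))|].
  rewrite (vnorm_ext d _ (fun k => ((x a s k - x b s k) - (x a T k - x b T k))
                                   + ((x a T k - x b T k) - (x a 0 k - x b 0 k))))
    by (intros; ring).
  pose proof (vnorm_triangle d (fun k => (x a s k - x b s k) - (x a T k - x b T k))
                (fun k => (x a T k - x b T k) - (x a 0 k - x b 0 k))).
  specialize (Hnear s Hs a b Ha Hb). specialize (Hdrift a b Ha Hb). lra.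
Qed.

Lemma weighted_energy_right_extend :
  connects initial_edge N -> 4 * sqrt (energy 0) / rate <= r / 8 -> forall T, 0 <= T ->
  (forall s, 0 <= s <= T -> weighted_energy s <= energy 0) ->
  exists del, 0 < del /\ forall s, T <= s <= T + del -> weighted_energy s <= energy 0.
Proof.
  intros Hconn Hsmall T HT Hbound.
  destruct (initial_edges_stay_short T HT) as [d1 [Hd1 Hshort]].
  { intros a b Ha Hb. eapply Rle_trans; [apply relative_drift_le|]; auto. }
  destruct (separation_or_consensus T HT) as [[d2 [Hd2 Hsep]]|Hcons].
  - exists (Rmin d1 d2). split; [apply Rmin_glb_lt; auto|].
    pose proof (Rmin_l d1 d2). pose proof (Rmin_r d1 d2).
    intros s Hs. destruct (Req_dec s T) as [->|HsT]; [apply Hbound; lra|].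
    eapply Rle_trans; [|apply (Hbound T); lra].
    apply (nonincreasing_of_deriv_nonpos weighted_energy
      (fun c => (- (kappa / INR N) * dissipation c + rate * energy c) * exp (rate * c)));
      try lra.
    + apply weighted_energy_cont; auto.
    + intros. apply weighted_energy_deriv. lra.
    + intros c Hc. apply weighted_energy_deriv_nonpos; auto; [lra| |].
      * intros. apply (Hshort c); auto. lra.
      * apply Hsep. lra.
  - exists 1. split; [lra|]. intros s Hs. unfold weighted_energy.
    rewrite (energy_vanishes_of_consensus T HT Hcons s) by lra.
    rewrite Rmult_0_l. apply energy_nonneg.
Qed.

Lemma weighted_energy_le_initial :
  chain_connected torus d N (fun i => x i 0) r -> 4 * sqrt (energy 0) / rate <= r / 8 ->
  forall t, 0 <= t -> weighted_energy t <= energy 0.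
Proof.
  intros Hch Hsmall. apply real_induction_nonneg.
  - apply weighted_energy_left_closed.
  - apply weighted_energy_right_extend; auto. apply initial_edges_connect. exact Hch.
Qed.

Lemma sqrt_energy0_le_dv2 : sqrt (energy 0) <= INR N * dv2 d N v 0.
Proof.
  pose proof INR_N_pos. pose proof (energy_nonneg 0).
  assert (E : sumUpto (fun i => sumUpto (fun j => (vnorm d (vsub (v i 0) (v j 0)))^2) N) N
              = 2 * INR N * energy 0).
  { unfold energy.
    rewrite <- (dsum_sq_dist_centered N d (fun i k => fluct i 0 k))
      by (intros; apply fluct_mean_zero; auto; lra).
    apply sumUpto_ext; intros i Hi. apply sumUpto_ext; intros j Hj.
    rewrite vnorm_sq. apply sumUpto_ext; intros. unfold vsub, fluct. f_equal. ring. }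
  unfold dv2. rewrite E.
  assert (0 <= / INR N ^ 2 * (2 * INR N * energy 0))
    by (apply Rmult_le_pos; [apply Rlt_le, Rinv_0_lt_compat, pow_lt | nra]; auto).
  apply sq_le_sq_inv; [apply sqrt_pos | apply Rmult_le_pos; [lra | apply sqrt_pos]|].
  rewrite Rpow_mult_distr, !pow2_sqrt by auto.
  replace (INR N ^ 2 * (/ INR N ^ 2 * (2 * INR N * energy 0))) with (2 * INR N * energy 0)
    by (field; lra).
  assert (1 <= INR N) by (apply (le_INR 1); auto). nra.
Qed.

Lemma drift_small :
  16 * INR N ^ 4 / r * dv2 d N v 0 <= kappa -> 4 * sqrt (energy 0) / rate <= r / 8.
Proof.
  intros Hkap. pose proof INR_N_pos. pose proof sqrt_energy0_le_dv2.
  unfold rate. replace (4 * sqrt (energy 0) / (2 * kappa / INR N ^ 3))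
    with (2 * INR N ^ 3 * sqrt (energy 0) / kappa) by (field; lra).
  apply Rmult_le_reg_r with kappa; auto.
  unfold Rdiv at 1. rewrite Rmult_assoc, Rinv_l, Rmult_1_r by lra.
  apply Rle_trans with (2 * INR N ^ 3 * (INR N * dv2 d N v 0)).
  - apply Rmult_le_compat_l; auto. apply Rmult_le_pos; [lra | apply pow_le; lra].
  - apply Rmult_le_compat_r with (r := r / 8) in Hkap; [|lra].
    replace (16 * INR N ^ 4 / r * dv2 d N v 0 * (r / 8))
      with (2 * INR N ^ 3 * (INR N * dv2 d N v 0)) in Hkap by (field; lra).
    lra.
Qed.

Lemma flocking_estimate :
  chain_connected torus d N (fun i => x i 0) r ->
  16 * INR N ^ 4 / r * dv2 d N v 0 <= kappa ->
  forall t, 0 <= t ->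
    maxUpto (fun i => vnorm d (vsub (v i t) (vbar0 N v))) N <=
      dvinf d N v 0 * exp (- (kappa / INR N) * t) +
      2 * INR N * dv2 d N v 0 * exp (- (kappa / (INR N)^3) * t).
Proof.
  intros Hch Hkap t Ht. pose proof INR_N_pos. pose proof sqrt_energy0_le_dv2.
  pose proof (sqrt_pos (energy 0)). pose proof (energy_nonneg 0).
  pose proof (maxUpto_nonneg (fun i => maxUpto (fun j => vnorm d (vsub (v i 0) (v j 0))) N) N).
  fold (dvinf d N v 0) in H3.
  pose proof (exp_pos (- (kappa / INR N) * t)). pose proof (exp_pos (- (kappa / INR N ^ 3) * t)).
  assert (Hdecay : sqrt (energy t) <= sqrt (energy 0) * exp (- (kappa / (INR N)^3) * t)).
  { apply sq_le_sq_inv; [apply sqrt_pos | apply Rmult_le_pos; lra|].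
    rewrite pow2_sqrt, Rpow_mult_distr, pow2_sqrt by (auto; apply energy_nonneg).
    replace (- (kappa / INR N ^ 3) * t) with ((- rate * t) / 2) by (unfold rate; field; lra).
    rewrite exp_half. apply energy_decay_of_weighted, weighted_energy_le_initial; auto.
    apply drift_small; auto. }
  assert (0 <= dvinf d N v 0 * exp (- (kappa / INR N) * t)) by (apply Rmult_le_pos; lra).
  assert (sqrt (energy 0) * exp (- (kappa / INR N ^ 3) * t)
          <= INR N * dv2 d N v 0 * exp (- (kappa / INR N ^ 3) * t))
    by (apply Rmult_le_compat_r; lra).
  assert (0 <= dv2 d N v 0) by apply sqrt_pos.
  assert (0 <= INR N * dv2 d N v 0 * exp (- (kappa / INR N ^ 3) * t))
    by (apply Rmult_le_pos; [apply Rmult_le_pos|]; lra).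
  apply maxUpto_le; [lra|]. intros i Hi.
  assert (vnorm d (vsub (v i t) (vbar0 N v)) <= sqrt (energy t)); [|lra].
  apply sqrt_le_1_alt.
  apply (sumUpto_term_le (fun i => sumUpto (fun k => (fluct i t k)^2) d) N i); auto.
  intros; apply sumUpto_sq_nonneg.
Qed.

End CuckerSmale.

Lemma phi_ge1_below_2r (phi : R -> R) r : 0 < r -> (exists s, Dphi_set phi s) ->
  (forall D, is_lub (Dphi_set phi) D -> r <= D / 6) -> forall h, 0 < h <= 2 * r -> 1 <= phi h.
Proof.
  intros Hr Hex Hlub h Hh.
  assert (exists s, Dphi_set phi s /\ h <= s) as [s [[Hs0 Hs] Hhs]].
  { apply NNPP. intros Hn.
    assert (Hb : forall s, Dphi_set phi s -> s <= h).
    { intros s Hs. destruct (Rle_or_lt s h); auto. exfalso. apply Hn. exists s. split; auto; lra. }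
    destruct (completeness (Dphi_set phi) ltac:(exists h; intros s Hs; apply Hb; auto) Hex)
      as [D HD].
    specialize (Hlub D HD). destruct HD as [_ HD2]. specialize (HD2 h Hb). lra. }
  apply Hs. lra.
Qed.

Theorem theorem1p2 :
  exists C : R, 1 <= C /\
  forall (torus : bool) (d N : nat) (phi : R -> R) (kappa r : R)
         (x v : nat -> R -> vec),
    (1 <= d)%nat -> (1 <= N)%nat ->
    (forall h, 0 <= h -> 0 <= phi h) ->
    0 < kappa ->
    (* D_phi > 0 *)
    (exists s, Dphi_set phi s) ->
    0 < r ->
    (* r <= D_phi / 6 (vacuous when D_phi = +oo) *)
    (forall D, is_lub (Dphi_set phi) D -> r <= D / 6) ->
    CS_solution torus d N phi kappa x v ->
    chain_connected torus d N (fun i => x i 0) r ->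
    C * (16 * (INR N)^4 / r * dv2 d N v 0) <= kappa ->
    forall t, 0 <= t ->
      maxUpto (fun i => vnorm d (vsub (v i t) (vbar0 N v))) N <=
        dvinf d N v 0 * exp (- (kappa / INR N) * t) +
        2 * INR N * dv2 d N v 0 * exp (- (kappa / (INR N)^3) * t).
Proof.
  exists 1. split; [lra|].
  intros torus d N phi kappa r x v _ HN Hphi0 Hk Hex Hr Hlub Hsol Hch Hkap.
  apply (flocking_estimate torus d N phi kappa r x v); auto.
  - apply phi_ge1_below_2r; auto.
  - lra.
Qed.
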